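(* Let $\Gamma=(\mathcal{G},\mathcal{I},\boldsymbol{c})$ be a nonatomic routing game with BPR-type cost functions, i.e., there is $\beta\in\mathbb{R}_+$ such that $c_e(x)=t_e+a_ex^{\beta}$ with $t_e,a_e\in\mathbb{R}_+$ for every edge $e$. Then there exists a demand-independent optimal toll (DIOT) for $\Gamma$.
   Context: A nonatomic routing game $\Gamma=(\mathcal{G},\mathcal{I},\boldsymbol{c})$ consists of a finite directed multigraph $\mathcal{G}=(\mathcal{V},\mathcal{E})$, a finite set $\mathcal{I}$ of origin-destination pairs $i$ with origin $o^i$ and destination $d^i$, and nondecreasing continuous cost functions $c_e:\mathbb{R}_+\to\mathbb{R}_+$. $\mathcal{P}^i$ is the set of simple $o^i$–$d^i$ paths. For a demand vector $\boldsymbol{\mu}\in\mathbb{R}_+^{\mathcal{I}}$, feasible flows are $\boldsymbol{f}\in\mathbb{R}_+^{\mathcal{P}}$ with $\sum_{p\in\mathcal{P}^i}f_p=\mu^i$; loads $x_e=\sum_{p\ni e}f_p$; path costs $c_p=\sum_{e\in p}c_e(x_e)$. A Wardrop equilibrium is a feasible flow where every used path of each pair $i$ has cost at most that of any other path in $\mathcal{P}^i$. The total cost is $L(\boldsymbol{f})=\sum_p f_pc_p(\boldsymbol{f})$; a system optimum minimizes $L$ over feasible flows. For a toll vector $\boldsymbol{\tau}\in\mathbb{R}^{\mathcal{E}}$ (entries may be negative), $\Gamma^{\boldsymbol{\tau}}$ has edge costs $c_e(x)+\tau_e$. $\boldsymbol{\tau}$ is a DIOT for $\Gamma$ if for every demand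 vector $\boldsymbol{\mu}\in\mathbb{R}_+^{\mathcal{I}}$ every Wardrop equilibrium of $\Gamma^{\boldsymbol{\tau}}$ with demand $\boldsymbol{\mu}$ is a system optimum of $\Gamma$ for demand $\boldsymbol{\mu}$. *)

From HB Require Import structures.
From mathcomp Require Import all_boot all_order all_algebra.
From mathcomp Require Import boolp reals exp.
Set Implicit Arguments. Unset Strict Implicit. Unset Printing Implicit Defensive.
Import Order.TTheory GRing.Theory Num.Theory.
Local Open Scope ring_scope.

Section Routing.
Variables (R : realType) (V E I : finType).
Variables (src dst : E -> V).
Variables (orig dest : I -> V).

Fixpoint is_walk (o d : V) (s : seq E) : bool :=
  match s with
  | [::] => o == d
  | e :: s' => (src e == o) && is_walk (dst e) d s'
  end.

Definition simple_path (o d : V) (s : seq E) : bool :=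
  is_walk o d s && uniq (o :: map dst s).

(* A simple path in a multigraph is determined by its edge set; we identify
   each simple o-d path with its (finite) set of edges. *)
Definition is_path_of (i : I) (S : {set E}) : Prop :=
  exists s : seq E, simple_path (orig i) (dest i) s /\ S = [set e in s].

Definition paths (i : I) : {set {set E}} := [set S | `[< is_path_of i S >]].

Definition flow := I -> {set E} -> R.

Definition feasible (mu : I -> R) (f : flow) : Prop :=
  (forall i S, 0 <= f i S) /\
  (forall i S, S \notin paths i -> f i S = 0) /\
  (forall i, \sum_(S in paths i) f i S = mu i).

Definition load (f : flow) (e : E) : R :=
  \sum_(i : I) \sum_(S in paths i | e \in S) f i S.

Definition path_cost (c : E -> R -> R) (f : flow) (S : {set E}) : R :=
  \sum_(e in S) c e (load f e).

Definition wardrop (c : E -> R -> R) (mu : I -> R) (f : flow) : Prop :=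
  feasible mu f /\
  forall i S S', S \in paths i -> S' \in paths i -> 0 < f i S ->
    path_cost c f S <= path_cost c f S'.

Definition total_cost (c : E -> R -> R) (f : flow) : R :=
  \sum_(i : I) \sum_(S in paths i) f i S * path_cost c f S.

Definition system_optimum (c : E -> R -> R) (mu : I -> R) (f : flow) : Prop :=
  feasible mu f /\ forall g, feasible mu g -> total_cost c f <= total_cost c g.

Definition tolled (c : E -> R -> R) (tau : E -> R) : E -> R -> R :=
  fun e x => c e x + tau e.

Definition is_DIOT (c : E -> R -> R) (tau : E -> R) : Prop :=
  forall mu : I -> R, (forall i, 0 <= mu i) ->
  forall f : flow, wardrop (tolled c tau) mu f -> system_optimum c mu f.

End Routing.

(** The toll [tau_e = t_e / (1 + beta) - t_e] makes every tolled edge cost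
    [t_e / (1 + beta) + a_e x^beta] a fixed positive multiple, [1 / (1 + beta)],
    of the marginal cost [m_e(x) = t_e + (1 + beta) a_e x^beta = (x c_e(x))'].
    A Wardrop equilibrium [f] of the tolled game therefore satisfies the
    variational inequality [sum_e m_e(x_e) x_e <= sum_e m_e(x_e) y_e] against the
    loads [y] of any feasible flow with the same demand.  Since [x c_e(x)] is
    convex, its tangent at [x_e] lies below it, and summing the tangent
    inequalities [x_e c_e(x_e) + m_e(x_e) (y_e - x_e) <= y_e c_e(y_e)] shows
    [L(f) <= L(g)], whatever the demand. *)

From HB Require Import structures.
From mathcomp Require Import all_boot all_order all_algebra.
From mathcomp Require Import boolp reals exp.
From mathcomp Require Import ring lra.
Set Implicit Arguments. Unset Strict Implicit. Unset Printing Implicit Defensive.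
Import Order.TTheory GRing.Theory Num.Theory.
Local Open Scope ring_scope.

Lemma mul_powR_tangent_le (R : realType) (beta x y : R) :
  0 <= beta -> 0 <= x -> 0 <= y ->
  x * x `^ beta + (1 + beta) * x `^ beta * (y - x) <= y * y `^ beta.
Proof.
move=> beta_ge0 x_ge0 y_ge0.
have [->|beta_neq0] := eqVneq beta 0; first by rewrite !powRr0; lra.
have beta_gt0 : 0 < beta by rewrite lt_def beta_neq0 beta_ge0.
have p_gt0 : 0 < 1 + beta by lra.
have q_gt0 : 0 < (1 + beta) / beta by rewrite divr_gt0.
have conj_pq : (1 + beta)^-1 + ((1 + beta) / beta)^-1 = 1.
  by rewrite invf_div; field; rewrite gt_eqF.
have powR1D z : 0 <= z -> z `^ (1 + beta) = z * z `^ beta.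
  by move=> z_ge0; rewrite powRD ?powRr1 // gt_eqF.
(* Young's inequality for [y * x^beta] with conjugate exponents [1 + beta] and [(1 + beta) / beta] *)
have := conjugate_powR y_ge0 (powR_ge0 x beta) p_gt0 q_gt0 conj_pq.
rewrite -powRrM mulrCA divff ?mulr1 ?gt_eqF // !powR1D //.
move/(ler_wpM2l (ltW p_gt0)).
have -> : (1 + beta) * (y * y `^ beta / (1 + beta) + x * x `^ beta / ((1 + beta) / beta))
    = y * y `^ beta + beta * (x * x `^ beta).
  by field; rewrite !gt_eqF.
set X := x `^ beta; set Y := y `^ beta => young.
nra.
Qed.

Lemma sum_mul_le_of_support_argmin (R : realType) (T : finType) (A : {set T})
    (f g m : T -> R) :
  (forall S, 0 <= f S) -> (forall S, 0 <= g S) ->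
  \sum_(S in A) f S = \sum_(S in A) g S ->
  (forall S S', S \in A -> S' \in A -> 0 < f S -> m S <= m S') ->
  \sum_(S in A) f S * m S <= \sum_(S in A) g S * m S.
Proof.
move=> f_ge0 g_ge0 f_g_sum f_argmin.
set mu := \sum_(S in A) f S.
have cross_ge0 : 0 <= \sum_(S in A) \sum_(S' in A) f S * g S' * (m S' - m S).
  apply: sumr_ge0 => S SA; apply: sumr_ge0 => S' S'A.
  have [->|fS_neq0] := eqVneq (f S) 0; first by rewrite !mul0r.
  have fS_gt0 : 0 < f S by rewrite lt_def fS_neq0 f_ge0.
  by rewrite mulr_ge0 ?mulr_ge0 // subr_ge0 f_argmin.
have crossE : \sum_(S in A) \sum_(S' in A) f S * g S' * (m S' - m S)
    = mu * (\sum_(S in A) g S * m S - \sum_(S in A) f S * m S).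
  transitivity (\sum_(S in A) \sum_(S' in A) (f S * (g S' * m S') - g S' * (f S * m S))).
    by apply: eq_bigr => S _; apply: eq_bigr => S' _; ring.
  under eq_bigr => S _ do rewrite sumrB -mulr_sumr -mulr_suml -f_g_sum.
  rewrite sumrB -mulr_sumr mulrBr; congr (_ - _).
  by rewrite mulr_suml; apply: eq_bigr => S _; rewrite mulrC.
have [mu0|mu_neq0] := eqVneq mu 0.
  have f0 := psumr_eq0P (fun S _ => f_ge0 S) mu0.
  have g0 := psumr_eq0P (fun S _ => g_ge0 S) (etrans (esym f_g_sum) mu0).
  by rewrite !big1 // => S SA; rewrite ?f0 ?g0 // mul0r.
have mu_gt0 : 0 < mu by rewrite lt_def mu_neq0 sumr_ge0.
by rewrite -subr_ge0 -(pmulr_rge0 _ mu_gt0) -crossE.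
Qed.

Section MarginalCostTolls.
Variables (R : realType) (V E I : finType) (src dst : E -> V) (orig dest : I -> V).

Local Notation paths := (paths src dst orig dest).
Local Notation load := (load src dst orig dest).
Local Notation feasible := (feasible src dst orig dest).

Lemma sum_path_flows_edge_weights (h : flow R E I) (w : E -> R) :
  \sum_i \sum_(S in paths i) h i S * (\sum_(e in S) w e) = \sum_e w e * load h e.
Proof.
under [RHS]eq_bigr => e _ do rewrite mulr_sumr.
rewrite [RHS]exchange_big /=; apply: eq_bigr => i _.
under [RHS]eq_bigr => e _ do rewrite mulr_sumr big_mkcondr.
rewrite [RHS]exchange_big /=; apply: eq_bigr => S _.
rewrite mulr_sumr big_mkcond /=; apply: eq_bigr => e _.
by case: (e \in S); rewrite ?mulr0 // mulrC.
Qed.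

Lemma total_costE (c : E -> R -> R) (h : flow R E I) :
  total_cost src dst orig dest c h = \sum_e c e (load h e) * load h e.
Proof. by rewrite /total_cost sum_path_flows_edge_weights. Qed.

Lemma feasible_load_ge0 (mu : I -> R) (h : flow R E I) e :
  feasible mu h -> 0 <= load h e.
Proof. by case=> h_ge0 _; apply: sumr_ge0 => i _; apply: sumr_ge0. Qed.

Lemma wardrop_variational_inequality (c : E -> R -> R) (mu : I -> R) (f g : flow R E I) :
  wardrop src dst orig dest c mu f -> feasible mu g ->
  \sum_e c e (load f e) * load f e <= \sum_e c e (load f e) * load g e.
Proof.
move=> [[f_ge0 [_ f_sum]] f_wardrop] [g_ge0 [_ g_sum]].
rewrite -!sum_path_flows_edge_weights; apply: ler_sum => i _.
apply: sum_mul_le_of_support_argmin => //; first by rewrite f_sum g_sum.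
exact: f_wardrop.
Qed.

Lemma marginal_cost_toll_is_DIOT (c m : E -> R -> R) (tau : E -> R) (k : R) :
  0 < k ->
  (forall e x y, 0 <= x -> 0 <= y -> c e x * x + m e x * (y - x) <= c e y * y) ->
  (forall e x, 0 <= x -> c e x + tau e = k * m e x) ->
  is_DIOT src dst orig dest c tau.
Proof.
move=> k_gt0 tangent_le toll_marginal mu _ f f_eq.
have f_feas : feasible mu f by case: f_eq.
split=> // g g_feas.
pose x := load f; pose y := load g; rewrite !total_costE -/x -/y.
have x_ge0 e : 0 <= x e by exact: feasible_load_ge0 f_feas.
have y_ge0 e : 0 <= y e by exact: feasible_load_ge0 g_feas.
have vi : \sum_e m e (x e) * x e <= \sum_e m e (x e) * y e.
  have := wardrop_variational_inequality f_eq g_feas.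
  under eq_bigr => e _ do rewrite /tolled toll_marginal // -mulrA.
  under [in X in _ <= X -> _]eq_bigr => e _ do rewrite /tolled toll_marginal // -mulrA.
  by rewrite -!mulr_sumr ler_pM2l.
have tangent_sum :
    \sum_e (c e (x e) * x e + m e (x e) * (y e - x e)) <= \sum_e c e (y e) * y e.
  by apply: ler_sum => e _; exact: tangent_le.
apply: le_trans tangent_sum.
rewrite big_split /= lerDl.
under eq_bigr => e _ do rewrite mulrBr.
by rewrite sumrB subr_ge0.
Qed.

End MarginalCostTolls.

Theorem corollary3 (R : realType) (V E I : finType) (src dst : E -> V)
  (orig dest : I -> V) (beta : R) (t a : E -> R) :
  0 <= beta -> (forall e, 0 <= t e) -> (forall e, 0 <= a e) ->
  exists tau : E -> R,
    is_DIOT src dst orig dest (fun e x => t e + a e * x `^ beta) tau.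
Proof.
move=> beta_ge0 _ a_ge0.
have p_gt0 : 0 < 1 + beta by lra.
exists (fun e => t e / (1 + beta) - t e).
pose m e x := t e + (1 + beta) * a e * x `^ beta.
apply: (@marginal_cost_toll_is_DIOT _ _ _ _ _ _ _ _ _ m _ (1 + beta)^-1)
  => [|e x y x_ge0 y_ge0|e x _].
- by rewrite invr_gt0.
- have := ler_wpM2l (a_ge0 e) (mul_powR_tangent_le beta_ge0 x_ge0 y_ge0).
  rewrite /m; set X := x `^ beta; set Y := y `^ beta; nra.
- by rewrite /m; field; rewrite gt_eqF.
Qed.
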